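(* Let $\mathcal{V}$ be a real, separable, infinite-dimensional Hilbert space with orthonormal basis $(e_n)_{n\ge1}$. Let $\mathcal{X}=\{v=\sum_{n\ge1}c_ne_n\in\mathcal{V}:\sum_{n\ge1}|c_n|\le1\}$ and $\mathcal{Y}=\{v\in\mathcal{V}:\|v\|\le1\}$. Then there exists a class $\mathcal{F}\subset S_1(\mathcal{V},\mathcal{V})$ such that for every $T\in\mathbb{N}$: (i) $\mathrm{Rad}_T(\mathcal{F})\ge T/2$; (ii) $\inf_{\mathcal{A}}\mathtt{R}_{\mathcal{A}}(T,\mathcal{F})\le 2+8\sqrt{T\ln(2T)}$. In particular $\mathcal{F}$ is online learnable but sequential uniform convergence fails for its squared-loss class.
   Context: $S_1(\mathcal{V},\mathcal{V})$ is the set of compact linear operators $f:\mathcal{V}\to\mathcal{V}$ whose singular values are summable (trace class). Online protocol with instance space $\mathcal{X}$ and target space $\mathcal{Y}$: for $t=1,\dots,T$, an adversary picks $(x_t,y_t)\in\mathcal{X}\times\mathcal{Y}$ and reveals $x_t$; the learner $\mathcal{A}$, using past labeled examples and $x_t$ (and possibly internal randomness), predicts $\mathcal{A}(x_t)\in\mathcal{Y}$, then $y_t$ is revealed. The regret is \[\mathtt{R}_{\mathcal{A}}(T,\mathcal{F})=\sup_{(x_1,y_1),\dots,(x_T,y_T)\in\mathcal{X}\times\mathcal{Y}}\mathbb{E}\Big[\sum_{t=1}^T\|\mathcal{A}(x_t)-y_t\|^2-\inf_{f\in\mathcal{F}}\sum_{t=1}^T\|f(x_t)-y_t\|^2\Big].\]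 Sequential Rademacher complexity: with $\sigma_1,\dots,\sigma_T$ i.i.d. uniform on $\{-1,1\}$ and $\sigma_{<t}=(\sigma_1,\dots,\sigma_{t-1})$, \[\mathrm{Rad}_T(\mathcal{F})=\sup_{x,y}\mathbb{E}_\sigma\Big[\sup_{f\in\mathcal{F}}\sum_{t=1}^T\sigma_t\|f(x_t(\sigma_{<t}))-y_t(\sigma_{<t})\|^2\Big],\] the supremum over all sequences of maps $(x_t,y_t):\{-1,1\}^{t-1}\to\mathcal{X}\times\mathcal{Y}$. *)

(* The real separable infinite-dimensional Hilbert
   space V is modelled as l^2(N) over a realType R, with (e_n) the standard basis. *)
From HB Require Import structures.
From mathcomp Require Import all_boot all_order all_algebra.
From mathcomp Require Import all_classical all_reals all_analysis.
Set Implicit Arguments. Unset Strict Implicit. Unset Printing Implicit Defensive.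
Import Order.TTheory GRing.Theory Num.Theory.
Import numFieldNormedType.Exports.
Local Open Scope classical_set_scope.
Local Open Scope ring_scope.

Section Defs.
Variable R : realType.

Definition vec := nat -> R.

Definition vdiff (a b : vec) : vec := fun n => a n - b n.

Definition inV (v : vec) : Prop :=
  exists M : R, forall N, \sum_(n < N) v n ^+ 2 <= M.

Definition inX (v : vec) : Prop := forall N, \sum_(n < N) `|v n| <= 1.

Definition inY (v : vec) : Prop := forall N, \sum_(n < N) v n ^+ 2 <= 1.

Definition sqnorm (v : vec) : R := limn (series (fun n => v n ^+ 2)).
Definition ip (u v : vec) : R := limn (series (fun n => u n * v n)).

Definition orthonormal (u : nat -> vec) : Prop :=
  (forall i, inV (u i)) /\ (forall i j, ip (u i) (u j) = (i == j)%:R).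

(* S_1(V,V): compact operators with summable singular values, given by their
   Schmidt (singular value) decomposition f v = sum_k s_k <v,u_k> w_k,
   s_k >= 0 summable, (u_k), (w_k) orthonormal.  Only the action on V matters. *)
Definition trace_class (f : vec -> vec) : Prop :=
  exists (s : nat -> R) (u w : nat -> vec),
    (forall k, 0 <= s k) /\
    (exists M : R, forall N, \sum_(k < N) s k <= M) /\
    orthonormal u /\ orthonormal w /\
    (forall v, inV v -> forall m,
        f v m = limn (series (fun k => s k * ip v (u k) * w k m))).

(* A (possibly randomized) online learner: internal randomness is a probability
   space (Omega, P); given the history of past labeled examples and the current
   instance, it predicts a point of Y. *)
Record learner := Learner {
  l_disp : measure_display;
  l_Omega : measurableType l_disp;
  l_P : probability l_Omega R;
  l_A : l_Omega -> seq (vec * vec) -> vec -> vec;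
  l_inY : forall w h x, inY (l_A w h x);
  l_meas : forall h x y,
      measurable_fun setT (fun w => sqnorm (vdiff (l_A w h x) y))
}.

(* history (x_1,y_1),...,(x_{t-1},y_{t-1}) (0-indexed rounds 0..t-1) *)
Definition hist (xs ys : nat -> vec) (t : nat) : seq (vec * vec) :=
  [seq (xs i, ys i) | i <- iota 0 t].

Definition learner_loss (L : learner) (T : nat) (xs ys : nat -> vec)
  (w : l_Omega L) : R :=
  \sum_(t < T) sqnorm (vdiff (l_A w (hist xs ys t) (xs t)) (ys t)).

Definition class_loss (f : vec -> vec) (T : nat) (xs ys : nat -> vec) : R :=
  \sum_(t < T) sqnorm (vdiff (f (xs t)) (ys t)).

Definition valid_seq (T : nat) (xy : (nat -> vec) * (nat -> vec)) : Prop :=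
  forall t, (t < T)%N -> inX (xy.1 t) /\ inY (xy.2 t).

Definition regret (L : learner) (T : nat) (F : set (vec -> vec)) : \bar R :=
  ereal_sup [set ((\int[l_P L]_w (@learner_loss L T xy.1 xy.2 w)%:E)
                  - ereal_inf [set (class_loss f T xy.1 xy.2)%:E | f in F])%E
            | xy in valid_seq T].

Definition sgn (b : bool) : R := if b then 1 else -1.

(* a tree: (x_t(sigma_{<t}), y_t(sigma_{<t})) = (x (take t s), y (take t s)) *)
Definition valid_tree (xy : (seq bool -> vec) * (seq bool -> vec)) : Prop :=
  forall s, inX (xy.1 s) /\ inY (xy.2 s).

Definition rad_inner (F : set (vec -> vec)) (T : nat)
  (xy : (seq bool -> vec) * (seq bool -> vec)) (s : T.-tuple bool) : \bar R :=
  ereal_sup [set (\sum_(t < T) sgn (tnth s t) *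
       sqnorm (vdiff (f (xy.1 (take t s))) (xy.2 (take t s))))%:E | f in F].

Definition Rad (F : set (vec -> vec)) (T : nat) : \bar R :=
  ereal_sup [set ((2 ^- T : R)%:E * \sum_(s : T.-tuple bool) rad_inner F xy s)%E
            | xy in valid_tree].

End Defs.

(* The class consists of the operators [expert n], one for each finite bit string
   [bits n]: [expert n] maps [e_k] to [e_(cell n k)] or to [0] according to bit [k], and
   the cells of different experts are disjoint, so each expert has finite rank.  On the
   tree [x_t = e_t], [y_t = 0], the expert coding the sign path has loss [1] exactly at
   the rounds of sign [+1], whence [Rad_T >= T/2].

   An expert can beat the zero predictor only by the energy that the labels put on its
   cells, and as cells are disjoint this energy is at most [1] per round.  Hence by
   round [t] at most [t] experts are awake (have received energy [>= 1]), and while an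
   expert sleeps the zero predictor is as good up to a total of [2].  Hedge on the awake
   experts plus [T + 1 - #awake] copies of the zero predictor is Hedge with [T + 1]
   experts and losses in [[0, 4]]; the learner predicts the weighted mixture, whose loss
   is at most the weighted average by convexity.  The learning rate
   [sqrt (T ln 2T) / 4T] gives regret [2 + 8 sqrt (T ln 2T)]. *)

From Pilot Require Import Defs.
From mathcomp Require Import all_boot all_order all_algebra.
From mathcomp Require Import all_classical all_reals all_analysis.
From mathcomp Require Import ring lra.
Import Order.TTheory GRing.Theory Num.Theory.
Import numFieldNormedType.Exports.
Local Open Scope classical_set_scope.
Local Open Scope ring_scope.
Set Implicit Arguments. Unset Strict Implicit. Unset Printing Implicit Defensive.

Section OrdinalSums.
Variable V : nmodType.
Implicit Types (u : nat -> V) (P : pred nat).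

Lemma sum_ord_supp u M N : (forall k, (M <= k)%N -> u k = 0) -> (M <= N)%N ->
  \sum_(k < N) u k = \sum_(k < M) u k.
Proof.
move=> u0 MN; rewrite -!(big_mkord xpredT) (big_cat_nat (leq0n M) MN) /=.
by rewrite [X in _ + X]big_nat_cond [X in _ + X]big1 ?addr0 // => k /andP[/andP[/u0]].
Qed.

Lemma sum_ord_cond_bound P u M N :
  (forall k, P k -> (k < M)%N) -> (forall k, P k -> (k < N)%N) ->
  \sum_(k < N | P k) u k = \sum_(k < M | P k) u k.
Proof.
wlog MN : M N / (M <= N)%N.
  by move=> wlog PM PN; case: (leqP M N) => [|/ltnW] ?; [|symmetry]; apply: wlog.
move=> PM _; rewrite big_mkcond [RHS]big_mkcond /=.
apply: (sum_ord_supp (u := fun k => if P k then u k else 0) _ MN) => k Mk.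
by case: ifP => // /PM; rewrite ltnNge Mk.
Qed.

Lemma sum_ord_single P u k0 N : (forall k, k != k0 -> u k = 0) ->
  \sum_(k < N | P k) u k = if (k0 < N)%N && P k0 then u k0 else 0.
Proof.
move=> u0; case: ifP => [/andP[k0N Pk0]|Nk0].
  rewrite (bigD1 (Ordinal k0N)) //= big1 ?addr0 // => k /andP[_ kk0].
  by apply: u0; apply: contra kk0 => /eqP kk0; apply/eqP/val_inj.
rewrite big1 // => k Pk; apply: u0; apply/eqP => kk0.
by move: Nk0; rewrite -kk0 ltn_ord Pk.
Qed.

End OrdinalSums.

Section NumSums.
Variable R : numDomainType.
Implicit Types (u : nat -> R) (P : pred nat).

Lemma sum_ord_mono u N N' : (forall k, 0 <= u k) -> (N <= N')%N ->
  \sum_(k < N) u k <= \sum_(k < N') u k.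
Proof.
move=> u0 NN'; rewrite -!(big_mkord xpredT) (big_cat_nat (leq0n N) NN') /=.
by rewrite lerDl; apply: sumr_ge0.
Qed.

Lemma sqr_sum_single P u k0 N : (forall k, k != k0 -> u k = 0) ->
  (\sum_(k < N | P k) u k) ^+ 2 = \sum_(k < N | P k) u k ^+ 2.
Proof.
move=> u0; rewrite (sum_ord_single _ _ u0).
rewrite (@sum_ord_single _ P (fun k => u k ^+ 2) k0) => [|k /u0->]; last by rewrite expr0n.
by case: ifP; rewrite ?expr0n.
Qed.

End NumSums.

Section FiniteSeries.
Variable R : realType.
Implicit Types (u : nat -> R).

Lemma series_finsupp u N n : (forall k, (N <= k)%N -> u k = 0) -> (N <= n)%N ->
  series u n = \sum_(k < N) u k.
Proof. by move=> u0 Nn; rewrite seriesEnat /= big_mkord (sum_ord_supp u0). Qed.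

Lemma cvg_series_finsupp u N : (forall k, (N <= k)%N -> u k = 0) ->
  cvgn (series u).
Proof.
move=> u0; apply: (is_cvg_near_cst (\sum_(k < N) u k)).
by near=> n; apply: series_finsupp => //; near: n; exact: nbhs_infty_ge.
Unshelve. all: by end_near.
Qed.

Lemma lim_series_finsupp u N : (forall k, (N <= k)%N -> u k = 0) ->
  limn (series u) = \sum_(k < N) u k.
Proof.
move=> u0; apply: lim_near_cst => //.
by near=> n; apply: series_finsupp => //; near: n; exact: nbhs_infty_ge.
Unshelve. all: by end_near.
Qed.

Lemma lim_series_single u k0 : (forall k, k != k0 -> u k = 0) ->
  limn (series u) = u k0.
Proof.
move=> u0; rewrite (@lim_series_finsupp _ k0.+1) => [|k].
  by rewrite (sum_ord_single xpredT _ u0) ltnSn.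
by rewrite ltnNge => k0k; apply: u0; apply: contra k0k => /eqP->.
Qed.

End FiniteSeries.

Notation sqloss p y := (sqnorm (vdiff p y)).

Section SquaredNorm.
Variable R : realType.
Implicit Types (d y : vec R).

Let nondecreasing_sqs y : {homo series (fun n => y n ^+ 2) : n m / (n <= m)%N >-> n <= m}.
Proof. by apply: nondecreasing_series => n _ _; exact: sqr_ge0. Qed.

Lemma cvgn_sqnorm y : inY y -> cvgn (series (fun n => y n ^+ 2)).
Proof.
move=> Y; apply: nondecreasing_is_cvgn; first exact: nondecreasing_sqs.
by exists 1 => _ [n _ <-]; rewrite seriesEnat /= big_mkord.
Qed.

Lemma sum_sqr_le_sqnorm y N : inY y -> \sum_(n < N) y n ^+ 2 <= sqnorm y.
Proof.
move=> Y; have := nondecreasing_cvgn_le (@nondecreasing_sqs y) (cvgn_sqnorm Y) N.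
by rewrite seriesEnat /= big_mkord.
Qed.

Lemma sqnorm_le1 y : inY y -> sqnorm y <= 1.
Proof.
move=> Y; apply: limr_le; first exact: cvgn_sqnorm.
by near=> n; rewrite seriesEnat /= big_mkord.
Unshelve. all: by end_near.
Qed.

Lemma sqnorm_ge0 y : inY y -> 0 <= sqnorm y.
Proof. by move=> Y; apply: le_trans (sum_sqr_le_sqnorm 0 Y); rewrite big_ord0. Qed.

Lemma inY_cst0 : inY (cst 0 : vec R).
Proof. by move=> N; rewrite big1 // => i _; rewrite expr0n. Qed.

Lemma sqnorm_cst0 : sqnorm (cst 0 : vec R) = 0.
Proof. by rewrite /sqnorm (@lim_series_finsupp _ _ 0) ?big_ord0 // => k _; rewrite expr0n. Qed.

Lemma sqloss_finsupp d y M : (forall i, (M <= i)%N -> d i = 0) -> inY y ->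
  sqloss d y = sqnorm y + \sum_(i < M) (d i ^+ 2 - 2 * d i * y i).
Proof.
move=> d0 Y; rewrite /sqnorm; have -> : (fun n => vdiff d y n ^+ 2) =
    (fun n => y n ^+ 2) + (fun n => d n ^+ 2 - 2 * d n * y n).
  by apply: funext => n; rewrite /vdiff !fctE; ring.
have d0' k : (M <= k)%N -> d k ^+ 2 - 2 * d k * y k = 0 by move/d0->; ring.
rewrite seriesD limD; [|exact: cvgn_sqnorm|exact: cvg_series_finsupp d0'].
by rewrite (lim_series_finsupp d0').
Qed.

Lemma sqloss0 y : sqloss (cst 0) y = sqnorm y.
Proof.
by rewrite /sqnorm; congr (limn (series _)); apply: funext => n; rewrite /vdiff sub0r sqrrN.
Qed.

Lemma sqloss_bounds d y M : (forall i, (M <= i)%N -> d i = 0) ->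
  \sum_(i < M) d i ^+ 2 <= 1 -> inY y -> 0 <= sqloss d y <= 4.
Proof.
move=> d0 d1 Y; rewrite (sqloss_finsupp d0 Y).
have yM := sum_sqr_le_sqnorm M Y; have y1 := sqnorm_le1 Y.
have cross_ge : - \sum_(i < M) y i ^+ 2 <= \sum_(i < M) (d i ^+ 2 - 2 * d i * y i).
  rewrite -sumrN; apply: ler_sum => i _; have := sqr_ge0 (d i - y i); nra.
have cross_le : \sum_(i < M) (d i ^+ 2 - 2 * d i * y i) <=
    2 * \sum_(i < M) d i ^+ 2 + \sum_(i < M) y i ^+ 2.
  rewrite mulr_sumr -big_split /=; apply: ler_sum => i _; have := sqr_ge0 (d i + y i); nra.
have yM1 := Y M; apply/andP; split; lra.
Qed.

End SquaredNorm.

Section Experts.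
Variable R : realType.
Implicit Types (v y : vec R).

Definition basis_vec (j : nat) : vec R := fun i => (i == j)%:R.

Lemma ip_basis_vec v k : ip v (basis_vec k) = v k.
Proof.
rewrite /ip (@lim_series_single _ _ k) /basis_vec ?eqxx ?mulr1 // => j /negbTE->.
by rewrite mulr0.
Qed.

Lemma orthonormal_basis_vec (q : nat -> nat) : injective q ->
  Defs.orthonormal (fun k => basis_vec (q k)).
Proof.
move=> q_inj; split=> [k|k l]; last by rewrite ip_basis_vec /basis_vec (inj_eq q_inj) eq_sym.
exists 1 => N; rewrite (@sum_ord_single _ xpredT (fun i => basis_vec (q k) i ^+ 2) (q k)).
  by case: ifP; rewrite /basis_vec ?eqxx ?expr1n.
by move=> i /negbTE ik; rewrite /basis_vec ik expr0n.
Qed.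

(* Bit strings and cells are coded with [pickle]; since [cell] is injective in both
   arguments, every coordinate [i] has at most one [owner]. *)
Definition bits (n : nat) : seq bool := odflt [::] (unpickle n).
Definition bit (n k : nat) : bool := nth false (bits n) k.
Definition cell (n k : nat) : nat := pickle (n, k).
Definition decode (i : nat) : option (nat * nat) := pickle_inv i.
Definition owner (i : nat) : nat := if decode i is Some (m, _) then m else 0.
Definition slot (i : nat) : nat := if decode i is Some (_, k) then k else 0.
Definition on_block (n i : nat) : bool :=
  if decode i is Some (m, k) then (m == n) && bit n k else false.
Definition block_bound (n : nat) : nat := \max_(k < size (bits n)) (cell n k).+1.

Definition expert (n : nat) (v : vec R) : vec R :=
  fun i => if on_block n i then v (slot i) else 0.

Lemma bit_size n k : bit n k -> (k < size (bits n))%N.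
Proof. by rewrite /bit; case: ltnP => // ?; rewrite nth_default. Qed.

Lemma sum_bit_le_size n N : \sum_(k < N) (bit n k)%:R <= (size (bits n))%:R :> R.
Proof.
have b0 k : (size (bits n) <= k)%N -> (bit n k)%:R = 0 :> R.
  by move=> nk; case b: bit => //; move: (bit_size b); rewrite ltnNge nk.
have widen := @sum_ord_mono R (fun k => (bit n k)%:R) _ _ (fun k => ler0n _ _)
  (leq_addr (size (bits n)) N).
apply: le_trans widen _.
rewrite (sum_ord_supp b0 (leq_addl _ _)).
apply: le_trans (_ : \sum_(k < size (bits n)) (1 : R) <= _).
  by apply: ler_sum => k _; rewrite lern1 leq_b1.
by rewrite sumr_const card_ord.
Qed.

Lemma bits_coded (s : seq bool) : bits (pickle s) = s.
Proof. by rewrite /bits pickleK. Qed.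

Lemma cell_inj n : injective (cell n).
Proof. by move=> k l /(pcan_inj (@pickleK_inv (nat * nat)%type)) [->]. Qed.

Lemma decode_cell n k : decode (cell n k) = Some (n, k).
Proof. exact: pickleK_inv. Qed.

Lemma on_block_cell n k : on_block n (cell n k) = bit n k.
Proof. by rewrite /on_block decode_cell eqxx. Qed.

Lemma slot_cell n k : slot (cell n k) = k.
Proof. by rewrite /slot decode_cell. Qed.

Lemma on_blockP n i : reflect (exists2 k, i = cell n k & bit n k) (on_block n i).
Proof.
apply: (iffP idP) => [|[k -> b]]; last by rewrite on_block_cell.
rewrite /on_block; case E: decode => [[m k]|] // /andP[/eqP <- b].
exists k => //; move: (@pickle_invK (nat * nat)%type i).
by rewrite /decode in E; rewrite E /= => <-.
Qed.

Lemma on_block_owner n i : on_block n i -> owner i = n.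
Proof. by case/on_blockP => k -> _; rewrite /owner decode_cell. Qed.

Lemma on_block_bound n i : on_block n i -> (i < block_bound n)%N.
Proof. by case/on_blockP => k -> /bit_size kn; exact: (leq_bigmax (Ordinal kn)). Qed.

Lemma expert_supp n v i : (block_bound n <= i)%N -> expert n v i = 0.
Proof.
rewrite /expert; case: ifP => // /on_block_bound.
by rewrite ltnNge => /negbTE->.
Qed.

Lemma expert_owner n v i : n != owner i -> expert n v i = 0.
Proof. by rewrite /expert; case: ifP => // /on_block_owner->; rewrite eqxx. Qed.

Lemma sum_on_block n M (h : nat -> R) : (block_bound n <= M)%N ->
  \sum_(i < M | on_block n i) h i = \sum_(k < size (bits n) | bit n k) h (cell n k).
Proof.
move=> nM; rewrite -(big_mkord (on_block n)) -(big_mkord (bit n) (fun k => h (cell n k))).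
rewrite -(big_filter _ (on_block n)) -(big_filter _ (bit n)) -(big_map (cell n) xpredT h).
apply: perm_big; apply: uniq_perm.
- by apply: filter_uniq; exact: iota_uniq.
- by rewrite map_inj_uniq ?filter_uniq ?iota_uniq //; exact: cell_inj.
move=> i; rewrite mem_filter mem_index_iota /=.
apply/andP/mapP => [[/on_blockP[k -> b] _]|[k]].
  by exists k; rewrite // mem_filter mem_index_iota b bit_size.
rewrite mem_filter => /andP[b _] ->.
by rewrite on_block_cell b (leq_trans (on_block_bound _) nM) ?on_block_cell.
Qed.

Lemma sum_sqr_expert n v M : (block_bound n <= M)%N ->
  \sum_(i < M) expert n v i ^+ 2 = \sum_(k < size (bits n) | bit n k) v k ^+ 2.
Proof.
move=> nM; rewrite (bigID (fun i : 'I_M => on_block n i)) /=.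
rewrite [X in _ + X]big1 ?addr0 => [|i /negbTE ni]; last by rewrite /expert ni expr0n.
rewrite (eq_bigr (fun i : 'I_M => v (slot i) ^+ 2)) => [|i b]; last by rewrite /expert b.
rewrite (@sum_on_block n M (fun i => v (slot i) ^+ 2) nM).
by apply: eq_bigr => k _; rewrite slot_cell.
Qed.

Lemma trace_class_expert n : trace_class (expert n).
Proof.
exists (fun k => (bit n k)%:R), basis_vec, (fun k => basis_vec (cell n k)).
split; first by move=> k; exact: ler0n.
split; first by exists (size (bits n))%:R; exact: sum_bit_le_size.
split; first exact: (@orthonormal_basis_vec id).
split; first exact: orthonormal_basis_vec (@cell_inj n).
move=> v _ m; under eq_fun do rewrite ip_basis_vec.
rewrite /expert; case: ifPn => [/on_blockP[k -> b]|nb].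
  rewrite (@lim_series_single _ _ k) /basis_vec ?slot_cell ?eqxx ?b ?mul1r ?mulr1 // => l lk.
  by rewrite (inj_eq (@cell_inj n)) eq_sym (negbTE lk) mulr0.
rewrite (@lim_series_finsupp _ _ 0) ?big_ord0 // => k _; rewrite /basis_vec.
case: eqP => [mk|_]; last by rewrite mulr0.
by move: nb; rewrite mk on_block_cell => /negbTE->; rewrite !mul0r.
Qed.

End Experts.

Lemma sum_tuple_count_true T :
  ((\sum_(s : T.-tuple bool) \sum_(t < T) tnth s t).*2 = T * 2 ^ T)%N.
Proof.
have negS : (\sum_(s : T.-tuple bool) \sum_(t < T) tnth s t =
             \sum_(s : T.-tuple bool) \sum_(t < T) ~~ tnth s t)%N.
  rewrite (reindex_inj (h := fun s : T.-tuple bool => [tuple of map negb s])).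
    by apply: eq_bigr => s _; apply: eq_bigr => t _; rewrite tnth_map.
  by move=> s1 s2 /(congr1 val) /(inj_map negb_inj) /val_inj.
rewrite -addnn {2}negS -big_split /= (eq_bigr (fun _ => T)) => [|s _].
  by rewrite sum_nat_const card_tuple card_bool mulnC.
rewrite -big_split /= (eq_bigr (fun _ => 1)) => [|t _]; last by rewrite addnC addn_negb.
by rewrite sum1_card card_ord.
Qed.

Section Rademacher.
Variable R : realType.

Definition expert_class : set (vec R -> vec R) := range (@expert R).

Lemma trace_class_expert_class f : expert_class f -> trace_class f.
Proof. by move=> [n _ <-]; exact: trace_class_expert. Qed.

Definition basis_tree : (seq bool -> vec R) * (seq bool -> vec R) :=
  (fun s => basis_vec R (size s), fun=> cst 0).

Lemma valid_basis_tree : valid_tree basis_tree.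
Proof.
move=> s; split => [N|]; last exact: inY_cst0.
rewrite (@sum_ord_single _ xpredT (fun i => `|basis_vec R (size s) i|) (size s)).
  by case: ifP; rewrite /basis_vec ?eqxx ?normr1 ?normr0.
by move=> i /negbTE si; rewrite /basis_vec si normr0.
Qed.

Lemma sqloss_expert_basis_vec n t :
  sqloss (expert n (basis_vec R t)) (cst 0) = (bit n t)%:R.
Proof.
rewrite (sqloss_finsupp (@expert_supp R n _) (@inY_cst0 R)) sqnorm_cst0 add0r.
under eq_bigr do rewrite mulr0 subr0.
rewrite sum_sqr_expert // (@sum_ord_single _ (bit n) (fun k => basis_vec R t k ^+ 2) t).
  rewrite /basis_vec eqxx expr1n.
  by case b: (bit n t); rewrite ?andbT ?andbF ?(bit_size b).
by move=> k /negbTE kt; rewrite /basis_vec kt expr0n.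
Qed.

Lemma Rad_expert_class_ge T : ((T%:R / 2 : R)%:E <= Rad expert_class T)%E.
Proof.
apply: le_trans (ereal_sup_ubound _); last by exists basis_tree; first exact: valid_basis_tree.
have inner_ge (s : T.-tuple bool) :
    (((\sum_(t < T) tnth s t)%N%:R : R)%:E <= rad_inner expert_class basis_tree s)%E.
  apply: ereal_sup_ubound; exists (expert (pickle (val s))); first by exists (pickle (val s)).
  rewrite natr_sum; congr EFin; apply: eq_bigr => t _ /=.
  rewrite size_take size_tuple ltn_ord sqloss_expert_basis_vec /bit bits_coded -tnth_nth.
  by case: (tnth s t); rewrite /sgn ?mulr1 ?mulr0.
apply: le_trans (lee_wpmul2l _ (lee_sum _ (fun s _ => inner_ge s))); last first.
  by rewrite lee_fin invr_ge0 exprn_ge0.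
have count := congr1 (fun m => m%:R : R) (sum_tuple_count_true T).
rewrite /= -muln2 !natrM natrX in count.
rewrite sumEFin -EFinM lee_fin -natr_sum -[X in _ <= _ * X](mulfK (_ : (2 : R) != 0)) // count.
by rewrite [2 ^- T * _]mulrCA -mulrA mulVKf ?expf_neq0.
Qed.

End Rademacher.

Section Mixtures.
Variable R : realType.
Variables (N : nat) (P : pred nat) (a : nat -> R) (g : nat -> vec R) (own : nat -> nat).
Hypothesis a_ge0 : forall n, P n -> 0 <= a n.
Hypothesis sum_a_le1 : \sum_(n < N | P n) a n <= 1.
Hypothesis g_disjoint : forall n i, n != own i -> g n i = 0.

Definition mixture : vec R := fun i => \sum_(n < N | P n) a n * g n i.

Let a_le1 n : (n < N)%N -> P n -> a n <= 1.
Proof.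
move=> nN Pn; apply: le_trans sum_a_le1.
by rewrite (bigD1 (Ordinal nN)) //= lerDl; apply: sumr_ge0 => j /andP[/a_ge0].
Qed.

Let sqr_mixture i : mixture i ^+ 2 = \sum_(n < N | P n) a n ^+ 2 * g n i ^+ 2.
Proof.
rewrite /mixture (@sqr_sum_single R P (fun n => a n * g n i) (own i)).
  by apply: eq_bigr => n _; rewrite exprMn.
by move=> n /g_disjoint->; rewrite mulr0.
Qed.

Lemma inY_mixture : (forall n, P n -> inY (g n)) -> inY mixture.
Proof.
move=> gY M; under eq_bigr do rewrite sqr_mixture.
rewrite exchange_big /=; apply: le_trans sum_a_le1; apply: ler_sum => n Pn.
rewrite -mulr_sumr; apply: le_trans (_ : a n ^+ 2 * 1 <= _).
  by apply: ler_wpM2l; [exact: sqr_ge0|exact: gY].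
by rewrite mulr1 expr2 ler_piMr ?a_ge0 ?a_le1.
Qed.

Lemma sqloss_mixture_le (y : vec R) (M : nat -> nat) :
  (forall n i, (M n <= i)%N -> g n i = 0) -> inY y ->
  sqloss mixture y <=
    (1 - \sum_(n < N | P n) a n) * sqnorm y + \sum_(n < N | P n) a n * sqloss (g n) y.
Proof.
move=> g_supp Y; set B := (\max_(n < N) M n)%N.
have gB (n : 'I_N) i : (B <= i)%N -> g n i = 0.
  by move=> Bi; apply: g_supp; exact: leq_trans (leq_bigmax n) Bi.
rewrite (@sqloss_finsupp _ _ _ B) => [|i Bi|//]; last first.
  by rewrite /mixture big1 // => n _; rewrite gB ?mulr0.
under [X in _ <= _ + X]eq_bigr => n _ do rewrite (sqloss_finsupp (gB n) Y).
under [X in _ <= _ + X]eq_bigr => n _ do rewrite mulrDr.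
rewrite [X in _ <= _ + X]big_split /= addrA -mulr_suml -mulrDl subrK mul1r lerD2l.
under eq_bigr => i _ do rewrite sqr_mixture /mixture mulr_sumr mulr_suml -sumrB.
rewrite exchange_big /=; apply: ler_sum => n Pn; rewrite mulr_sumr.
apply: ler_sum => i _; have a0 := a_ge0 Pn; have a1 : 0 <= 1 - a n by rewrite subr_ge0 a_le1.
have := mulr_ge0 (mulr_ge0 a0 a1) (sqr_ge0 (g n i)); nra.
Qed.

End Mixtures.

Section Hedge.
Variable R : realType.

Lemma expR_neg_le (x : R) : 0 <= x -> expR (- x) <= 1 - x + x ^+ 2.
Proof.
move=> x0; rewrite expRN; have x1 : 0 < 1 + x by lra.
apply: le_trans (_ : (1 + x)^-1 <= _).
  by rewrite lef_pV2 ?posrE ?expR_gt0 ?expR_ge1Dx.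
by rewrite -[(1 + x)^-1]mul1r ler_pdivrMr //; nra.
Qed.

Lemma sum_below_threshold_le2 (d : nat -> R) t :
  (forall s, (s < t)%N -> 0 <= d s <= 1) ->
  \sum_(s < t) (if 1 <= \sum_(r < s) d r then 0 else d s) <= 2.
Proof.
suff : forall t, (forall s, (s < t)%N -> 0 <= d s <= 1) ->
    \sum_(s < t) (if 1 <= \sum_(r < s) d r then 0 else d s) <= Num.min 2 (\sum_(r < t) d r).
  by move=> + d01 => /(_ t d01); rewrite le_min => /andP[].
elim=> [|{}t IH] d01; first by rewrite !big_ord0 le_min lexx ler0n.
have /andP[d0 d1] := d01 t (ltnSn t).
have := IH (fun s st => d01 s (ltnW st)); rewrite !big_ord_recr /= !le_min => /andP[S2 Sd].
by case: ifP => [_|/negbT]; rewrite ?addr0 -?ltNge => *; apply/andP; split; lra.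
Qed.

Variable eta : R.
Hypothesis eta_ge0 : 0 <= eta.

Let expR_loss_le w l : 0 <= w -> 0 <= l <= 4 ->
  w * expR (- eta * l) <= w * (1 - eta * l + 16 * eta ^+ 2).
Proof.
move=> w0 /andP[l0 l4]; apply: ler_wpM2l => //.
rewrite mulNr; apply: le_trans (expR_neg_le (mulr_ge0 eta_ge0 l0)) _.
by rewrite lerD2l exprMn mulrC ler_wpM2r ?sqr_ge0 //; nra.
Qed.

Lemma hedge_step (I : Type) (r : seq I) (P : pred I) (w l : I -> R) (w0 l0 lA : R) :
  0 <= w0 -> 0 <= l0 <= 4 ->
  (forall j, P j -> 0 <= w j) -> (forall j, P j -> 0 <= l j <= 4) ->
  (w0 + \sum_(j <- r | P j) w j) * lA <= w0 * l0 + \sum_(j <- r | P j) w j * l j ->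
  w0 * expR (- eta * l0) + \sum_(j <- r | P j) w j * expR (- eta * l j) <=
    (w0 + \sum_(j <- r | P j) w j) * expR (- eta * lA + 16 * eta ^+ 2).
Proof.
move=> w00 l0b w_ge0 lb mixed_le.
have S0 : 0 <= \sum_(j <- r | P j) w j by exact: sumr_ge0.
apply: le_trans (_ : (w0 + \sum_(j <- r | P j) w j) * (1 - eta * lA + 16 * eta ^+ 2) <= _).
  apply: le_trans (lerD (expR_loss_le w00 l0b)
    (ler_sum _ (fun j Pj => expR_loss_le (w_ge0 j Pj) (lb j Pj)))) _.
  have -> : \sum_(j <- r | P j) w j * (1 - eta * l j + 16 * eta ^+ 2) =
      (\sum_(j <- r | P j) w j) * (1 + 16 * eta ^+ 2) - eta * \sum_(j <- r | P j) w j * l j.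
    by rewrite mulr_suml mulr_sumr -sumrB; apply: eq_bigr => j _; ring.
  have := ler_wpM2l eta_ge0 mixed_le; nra.
apply: ler_wpM2l; first exact: addr_ge0.
by apply: le_trans (expR_ge1Dx _); lra.
Qed.

End Hedge.

Section SleepingExperts.
Variable R : realType.
Implicit Types (h : seq (vec R * vec R)) (x y : vec R).

Definition energy n y := \sum_(i < block_bound n | on_block n i) y i ^+ 2.
Definition history_energy n h := \sum_(p <- h) energy n p.2.
Definition awake n h : bool := 1 <= history_energy n h.

(* Clipping keeps predictions in [Y] for arbitrary inputs; on [X] it does nothing
   ([clipped_expertE]). *)
Definition clipped_expert n x : vec R :=
  if \sum_(i < block_bound n) expert n x i ^+ 2 <= 1 then expert n x else cst 0.
Definition sleeping_pred n h x : vec R := if awake n h then clipped_expert n x else cst 0.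

Definition sleeping_loss n h := \sum_(r < size h)
  sqloss (sleeping_pred n (take r h) (nth (cst 0, cst 0) h r).1) (nth (cst 0, cst 0) h r).2.
Definition zero_loss h := \sum_(p <- h) sqnorm p.2.

Lemma energy_ge0 n y : 0 <= energy n y.
Proof. by apply: sumr_ge0 => i _; exact: sqr_ge0. Qed.

Lemma sum_energy_le1 (P : pred nat) N y : inY y -> \sum_(n < N | P n) energy n y <= 1.
Proof.
move=> Y; set B := (\max_(n < N) block_bound n)%N.
have energyE (n : 'I_N) : energy n y = \sum_(i < B | on_block n i) y i ^+ 2.
  apply: (sum_ord_cond_bound (fun i => y i ^+ 2)) => i /on_block_bound // /leq_trans.
  by apply; exact: leq_bigmax.
under eq_bigr do rewrite energyE.
rewrite (exchange_big_dep xpredT) //=; apply: le_trans (Y B); apply: ler_sum => i _.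
rewrite big_mkcond /=.
rewrite (@sum_ord_single _ xpredT (fun n => if P n && on_block n i then y i ^+ 2 else 0) (owner i)).
  by case: ifP => _; [case: ifP => _|]; rewrite ?sqr_ge0.
by move=> n ni; case: ifP => // /andP[_ /on_block_owner ni']; rewrite ni' eqxx in ni.
Qed.

Lemma energy_le1 n y : inY y -> energy n y <= 1.
Proof.
move=> Y; have := @sum_energy_le1 (pred1 n) n.+1 y Y.
by rewrite (big_pred1 (Ordinal (ltnSn n))).
Qed.

Lemma history_energy_rcons n h p :
  history_energy n (rcons h p) = history_energy n h + energy n p.2.
Proof. by rewrite /history_energy big_rcons. Qed.

Lemma zero_loss_rcons h p : zero_loss (rcons h p) = zero_loss h + sqnorm p.2.
Proof. by rewrite /zero_loss big_rcons. Qed.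

Lemma sleeping_loss_rcons n h p :
  sleeping_loss n (rcons h p) = sleeping_loss n h + sqloss (sleeping_pred n h p.1) p.2.
Proof.
rewrite /sleeping_loss size_rcons big_ord_recr /=; congr (_ + _).
  apply: eq_bigr => r _; have rh := ltn_ord r.
  by rewrite -cats1 takel_cat ?(ltnW rh) // nth_cat rh.
by rewrite -cats1 take_size_cat // nth_cat ltnn subnn.
Qed.

Lemma awake_rcons n h p : awake n h -> awake n (rcons h p).
Proof. by rewrite /awake history_energy_rcons => /le_trans; apply; rewrite lerDl energy_ge0. Qed.

Lemma sleeping_loss_asleep n h : ~~ awake n h -> sleeping_loss n h = zero_loss h.
Proof.
elim/last_ind: h => [|h p IH] asleep.
  by rewrite /sleeping_loss /zero_loss big_ord0 big_nil.
have asleep' : ~~ awake n h by apply: contra asleep; exact: awake_rcons.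
by rewrite sleeping_loss_rcons zero_loss_rcons IH // /sleeping_pred (negbTE asleep') sqloss0.
Qed.

Lemma sum_sqr_clipped_expert n x N : \sum_(i < N) clipped_expert n x i ^+ 2 <= 1.
Proof.
rewrite /clipped_expert; case: ifP => [ok|_]; last by rewrite big1 // => i _; rewrite expr0n.
apply: le_trans ok.
rewrite -[leRHS](@sum_ord_supp _ (fun i => expert n x i ^+ 2) _ (N + block_bound n)).
- exact: (sum_ord_mono (fun k => sqr_ge0 (expert n x k)) (leq_addr _ _)).
- by move=> i /expert_supp->; rewrite expr0n.
- exact: leq_addl.
Qed.

Lemma clipped_expert_supp n x i : (block_bound n <= i)%N -> clipped_expert n x i = 0.
Proof. by move=> ni; rewrite /clipped_expert; case: ifP => // _; rewrite expert_supp. Qed.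

Lemma clipped_expert_owner n x i : n != owner i -> clipped_expert n x i = 0.
Proof. by move=> ni; rewrite /clipped_expert; case: ifP => // _; rewrite expert_owner. Qed.

Lemma clipped_expertE n x : inX x -> clipped_expert n x = expert n x.
Proof.
move=> X; rewrite /clipped_expert sum_sqr_expert //; case: ifP => // /negbT/negP[].
apply: le_trans (X (size (bits n))); rewrite big_mkcond; apply: ler_sum => k _.
have xk1 : `|x k| <= 1.
  by apply: le_trans (X k.+1); rewrite big_ord_recr /= lerDr; apply: sumr_ge0.
by case: ifP => _; rewrite ?normr_ge0 // -real_normK ?num_real // expr2 ler_piMr.
Qed.

Lemma sqnorm_le_sqloss_expert n x y :
  inY y -> sqnorm y <= sqloss (expert n x) y + energy n y.
Proof.
move=> Y; rewrite (sqloss_finsupp (@expert_supp R n x) Y) -addrA lerDl /energy.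
rewrite [X in _ + X]big_mkcond -big_split; apply: sumr_ge0 => i _ /=; rewrite /expert.
case: ifP => _; last by rewrite expr0n !mulr0 mul0r subr0 addr0.
by have := sqr_ge0 (x (slot i) - y i); nra.
Qed.

End SleepingExperts.

Section HedgeLearner.
Variables (R : realType) (K : nat) (eta : R).
Implicit Types (h : seq (vec R * vec R)) (x : vec R).

Definition weight n h := expR (- eta * sleeping_loss n h).
Definition zero_weight h := expR (- eta * zero_loss h).
(* On valid histories finitely many experts are awake ([awake_bounded]); otherwise
   [xget] returns [0]. *)
Definition awake_bound h : nat := xget 0%N [set M | forall n, awake n h -> (n < M)%N].
Definition awake_count h : nat := (\sum_(n < awake_bound h | awake n h) 1)%N.

Definition potential h := zero_weight h * (K.+1 - awake_count h)%:R +
  \sum_(n < awake_bound h | awake n h) weight n h.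

Definition hedge_pred h x : vec R :=
  mixture (awake_bound h) (fun n => awake n h) (fun n => weight n h / potential h)
    (fun n => clipped_expert n x).

Lemma weight_rcons n h p :
  weight n (rcons h p) = weight n h * expR (- eta * sqloss (sleeping_pred n h p.1) p.2).
Proof. by rewrite /weight sleeping_loss_rcons mulrDr expRD. Qed.

Lemma zero_weight_rcons h p :
  zero_weight (rcons h p) = zero_weight h * expR (- eta * sqnorm p.2).
Proof. by rewrite /zero_weight zero_loss_rcons mulrDr expRD. Qed.

Lemma weight_asleep n h : ~~ awake n h -> weight n h = zero_weight h.
Proof. by move=> asleep; rewrite /weight sleeping_loss_asleep. Qed.

Lemma sum_weight_le_potential h :
  \sum_(n < awake_bound h | awake n h) weight n h <= potential h.
Proof. by rewrite lerDr mulr_ge0 ?expR_ge0. Qed.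

Lemma inY_hedge_pred h x : inY (hedge_pred h x).
Proof.
have w_ge0 n : 0 <= weight n h by exact: expR_ge0.
have Phi_ge0 : 0 <= potential h.
  by apply: le_trans (sum_weight_le_potential h); exact: sumr_ge0.
apply: (inY_mixture (own := owner)) => [n _|||n _ N].
- exact: divr_ge0.
- rewrite -mulr_suml; have [->|Phi_neq0] := eqVneq (potential h) 0.
    by rewrite invr0 mulr0.
  by rewrite ler_pdivrMr ?mul1r ?sum_weight_le_potential // lt_def Phi_neq0.
- by move=> n i; exact: clipped_expert_owner.
- exact: sum_sqr_clipped_expert.
Qed.

End HedgeLearner.

Section Histories.
Variables (R : realType) (xs ys : nat -> vec R).
Local Notation H t := (hist xs ys t).

Lemma hist_succ t : H t.+1 = rcons (H t) (xs t, ys t).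
Proof. by rewrite /hist -addn1 iotaD map_cat cats1. Qed.

Lemma history_energy_hist n t : history_energy n (H t) = \sum_(s < t) energy n (ys s).
Proof.
elim: t => [|t IH]; first by rewrite /history_energy big_nil big_ord0.
by rewrite hist_succ history_energy_rcons IH big_ord_recr.
Qed.

Lemma sleeping_loss_hist n t :
  sleeping_loss n (H t) = \sum_(s < t) sqloss (sleeping_pred n (H s) (xs s)) (ys s).
Proof.
elim: t => [|t IH]; first by rewrite /sleeping_loss !big_ord0.
by rewrite hist_succ sleeping_loss_rcons IH big_ord_recr.
Qed.

Lemma awake_mono n t t' : (t <= t')%N -> awake n (H t) -> awake n (H t').
Proof.
move=> tt' /le_trans; apply; rewrite !history_energy_hist.
exact: (sum_ord_mono (fun s => energy_ge0 n (ys s)) tt').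
Qed.

End Histories.

Section HedgeAnalysis.
Variables (R : realType) (T : nat) (xs ys : nat -> vec R).
Hypothesis valid : valid_seq T (xs, ys).
Local Notation H t := (hist xs ys t).

Let validX s : (s < T)%N -> inX (xs s). Proof. by case/valid. Qed.
Let validY s : (s < T)%N -> inY (ys s). Proof. by case/valid. Qed.

Lemma sum_awake_le t M : (t <= T)%N -> \sum_(n < M | awake n (H t)) (1 : R) <= t%:R.
Proof.
move=> tT; apply: le_trans (_ : \sum_(n < M | awake n (H t)) history_energy n (H t) <= _).
  by apply: ler_sum => n.
under eq_bigr do rewrite history_energy_hist.
rewrite exchange_big /=; apply: le_trans (_ : \sum_(s < t) (1 : R) <= _).
  apply: ler_sum => s _; apply: (sum_energy_le1 (fun n => awake n (H t)) M (validY _)).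
  exact: leq_trans (ltn_ord s) tT.
by rewrite sumr_const card_ord.
Qed.

Lemma awake_bounded t : (t <= T)%N -> exists M, forall n, awake n (H t) -> (n < M)%N.
Proof.
move=> tT; apply: contrapT => unbounded.
suff [M] : exists M, t.+1%:R <= \sum_(n < M | awake n (H t)) (1 : R).
  by move/le_trans/(_ (sum_awake_le M tT)); rewrite ler_nat ltnn.
elim: t.+1 => [|j [M HM]]; first by exists 0%N; rewrite big_ord0.
have [n Mn An] : exists2 n, (M <= n)%N & awake n (H t).
  apply: contrapT => none; apply: unbounded; exists M => n An.
  by rewrite ltnNge; apply/negP => Mn; apply: none; exists n.
exists n.+1; rewrite big_mkcond big_ord_recr /= An -big_mkcond -natr1 lerD2r.
apply: le_trans HM _; rewrite [leLHS]big_mkcond [leRHS]big_mkcond /=.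
apply: (sum_ord_mono (u := fun k => if awake k (H t) then 1 else 0)) => [k|//].
by case: ifP.
Qed.

Variables (K : nat) (eta : R).
Hypotheses (TK : (T <= K)%N) (eta_ge0 : 0 <= eta).
Local Notation potential := (potential K eta).
Local Notation weight := (weight eta).
Local Notation zero_weight := (zero_weight eta).
Local Notation hedge_pred := (hedge_pred K eta).
Let MT := awake_bound (H T).

Lemma awake_lt_MT t n : (t <= T)%N -> awake n (H t) -> (n < MT)%N.
Proof.
move=> tT An; apply: (xgetPex 0%N (awake_bounded (leqnn T))).
exact: awake_mono An.
Qed.

Lemma awake_lt_bound t n : (t <= T)%N -> awake n (H t) -> (n < awake_bound (H t))%N.
Proof.
move=> tT; apply: (xgetPex 0%N (P := [set M | forall n, awake n (H t) -> (n < M)%N])).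
by exists MT => m; exact: awake_lt_MT.
Qed.

Lemma sum_awake_MT t (F : nat -> R) : (t <= T)%N ->
  \sum_(n < awake_bound (H t) | awake n (H t)) F n = \sum_(n < MT | awake n (H t)) F n.
Proof.
move=> tT; apply: (@sum_ord_cond_bound _ (fun n => awake n (H t)) F) => n.
  exact: awake_lt_MT.
exact: awake_lt_bound.
Qed.

Lemma awake_count_MT t : (t <= T)%N ->
  (awake_count (H t))%:R = \sum_(n < MT | awake n (H t)) (1 : R).
Proof. by move=> tT; rewrite /awake_count natr_sum (sum_awake_MT (fun=> 1)). Qed.

Lemma awake_count_le t : (t <= T)%N -> (awake_count (H t) <= K)%N.
Proof.
move=> tT; rewrite -(ler_nat R) awake_count_MT //.
by apply: le_trans (sum_awake_le MT tT) _; rewrite ler_nat (leq_trans tT TK).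
Qed.

Lemma potentialE t : (t <= T)%N -> potential (H t) =
  zero_weight (H t) * (K.+1 - awake_count (H t))%:R +
  \sum_(n < MT | awake n (H t)) weight n (H t).
Proof. by move=> tT; rewrite /potential (sum_awake_MT (weight^~ (H t))). Qed.

Lemma potential_gt0 t : (t <= T)%N -> 0 < potential (H t).
Proof.
move=> tT; rewrite potentialE //; apply: ltr_pwDl.
  by rewrite mulr_gt0 ?expR_gt0 // ltr0n subn_gt0 ltnS awake_count_le.
by apply: sumr_ge0 => n _; exact: expR_ge0.
Qed.

Lemma potential_mix t : (t < T)%N ->
  potential (H t) * sqloss (hedge_pred (H t) (xs t)) (ys t) <=
  zero_weight (H t) * (K.+1 - awake_count (H t))%:R * sqnorm (ys t) +
  \sum_(n < MT | awake n (H t)) weight n (H t) * sqloss (clipped_expert n (xs t)) (ys t).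
Proof.
move=> tT; have Phi_gt0 := potential_gt0 (ltnW tT); set Phi := potential (H t).
have Phi_neq0 : Phi != 0 by rewrite gt_eqF.
have a_ge0 n : awake n (H t) -> 0 <= weight n (H t) / Phi.
  by rewrite divr_ge0 ?expR_ge0 ?ltW.
have sum_a_le1 : \sum_(n < awake_bound (H t) | awake n (H t)) weight n (H t) / Phi <= 1.
  by rewrite -mulr_suml ler_pdivrMr // mul1r sum_weight_le_potential.
have := sqloss_mixture_le a_ge0 sum_a_le1 (fun n i => @clipped_expert_owner R n (xs t) i)
  (fun n i => @clipped_expert_supp R n (xs t) i) (validY tT).
move/(ler_wpM2l (ltW Phi_gt0))/le_trans; apply; rewrite -/Phi mulrDr mulrA.
have -> : Phi * (1 - \sum_(n < awake_bound (H t) | awake n (H t)) weight n (H t) / Phi) =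
    zero_weight (H t) * (K.+1 - awake_count (H t))%:R.
  by rewrite mulrBr mulr1 -mulr_suml mulrCA mulfV // mulr1 /Phi /potential addrK.
rewrite mulr_sumr lerD2l (sum_awake_MT (fun n => Phi * (weight n (H t) / Phi *
  sqloss (clipped_expert n (xs t)) (ys t)))) ?(ltnW tT) //.
by apply: ler_sum => n _; rewrite mulrA [Phi * _]mulrCA mulfV // mulr1.
Qed.

Lemma potential_succ t : (t < T)%N ->
  potential (H t.+1) =
  zero_weight (H t) * (K.+1 - awake_count (H t))%:R * expR (- eta * sqnorm (ys t)) +
  \sum_(n < MT | awake n (H t))
    weight n (H t) * expR (- eta * sqloss (clipped_expert n (xs t)) (ys t)).
Proof.
move=> tT; have tT' := ltnW tT.
have still_awake n : awake n (H t.+1) && awake n (H t) = awake n (H t).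
  by case A: (awake n (H t)); rewrite ?andbT ?andbF // (awake_mono (leqnSn t) A).
set newly := \sum_(n < MT | awake n (H t.+1) && ~~ awake n (H t)) (1 : R).
have count_succ : (awake_count (H t.+1))%:R = (awake_count (H t))%:R + newly :> R.
  rewrite !awake_count_MT // (bigID (fun n : 'I_MT => awake n (H t))) /=.
  by under eq_bigl do rewrite still_awake.
rewrite potentialE // (bigID (fun n : 'I_MT => awake n (H t))) /=.
under eq_bigl do rewrite still_awake.
have -> : \sum_(n < MT | awake n (H t.+1) && ~~ awake n (H t)) weight n (H t.+1) =
    zero_weight (H t.+1) * newly.
  rewrite mulr_sumr; apply: eq_bigr => n /andP[_ asleep].
  rewrite mulr1 hist_succ weight_rcons zero_weight_rcons weight_asleep //.
  by rewrite /sleeping_pred (negbTE asleep) sqloss0.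
under eq_bigr => n An do rewrite hist_succ weight_rcons /sleeping_pred An.
have [cnt_t cnt_t1] := (leqW (awake_count_le tT'), leqW (awake_count_le tT)).
rewrite hist_succ zero_weight_rcons -hist_succ !natrB // count_succ /=.
ring.
Qed.

Lemma potential_step t : (t < T)%N ->
  potential (H t.+1) <= potential (H t) *
    expR (- eta * sqloss (hedge_pred (H t) (xs t)) (ys t) + 16 * eta ^+ 2).
Proof.
move=> tT; have Y := validY tT.
rewrite potential_succ // [X in _ <= X * _]potentialE ?(ltnW tT) //.
apply: hedge_step => //.
- by rewrite mulr_ge0 ?expR_ge0.
- by rewrite sqnorm_ge0 // (le_trans (sqnorm_le1 Y)) // ler1n.
- by move=> n _; exact: expR_ge0.
- move=> n _; apply: (sqloss_bounds _ _ Y) => [i|].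
    exact: clipped_expert_supp.
  exact: sum_sqr_clipped_expert.
- by rewrite -potentialE ?(ltnW tT) // potential_mix.
Qed.

Lemma potential0 : potential (H 0) = K.+1%:R.
Proof.
have asleep n : awake n (H 0) = false by rewrite /awake /history_energy big_nil ler10.
rewrite /potential /awake_count !big_pred0 // subn0 addr0.
by rewrite /zero_weight /zero_loss big_nil mulr0 expR0 mul1r.
Qed.

Local Notation hedge_loss t := (\sum_(s < t) sqloss (hedge_pred (H s) (xs s)) (ys s)).

Lemma potential_le t : (t <= T)%N ->
  potential (H t) <= K.+1%:R * expR (- eta * hedge_loss t + 16 * eta ^+ 2 * t%:R).
Proof.
elim: t => [|t IH] tT; first by rewrite potential0 big_ord0 !mulr0 addr0 expR0 mulr1.
apply: le_trans (potential_step tT) _.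
apply: le_trans (ler_wpM2r (expR_ge0 _) (IH (ltnW tT))) _.
rewrite -[leLHS]mulrA -expRD ler_pM2l ?ltr0Sn // ler_expR big_ord_recr -natr1 /=; lra.
Qed.

Lemma potential_ge n : expR (- eta * sleeping_loss n (H T)) <= potential (H T).
Proof.
have w_ge0 m : 0 <= weight m (H T) by exact: expR_ge0.
rewrite potentialE //; have [An|asleep] := boolP (awake n (H T)).
  apply: ler_wpDl; first by rewrite mulr_ge0 ?expR_ge0.
  rewrite (bigD1 (Ordinal (awake_lt_MT (leqnn T) An))) //= lerDl.
  exact: sumr_ge0.
apply: ler_wpDr; first exact: sumr_ge0.
rewrite sleeping_loss_asleep // -[leLHS]mulr1; apply: ler_wpM2l; first exact: expR_ge0.
by rewrite ler1n subn_gt0 ltnS awake_count_le.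
Qed.

Lemma sleeping_loss_le n : sleeping_loss n (H T) <= class_loss (expert n) T xs ys + 2.
Proof.
rewrite sleeping_loss_hist /class_loss.
have energy01 s : (s < T)%N -> 0 <= energy n (ys s) <= 1.
  by move=> sT; rewrite energy_ge0 energy_le1 //; exact: validY.
apply: le_trans (_ : \sum_(s < T) (sqloss (expert n (xs s)) (ys s) +
    (if 1 <= \sum_(r < s) energy n (ys r) then 0 else energy n (ys s))) <= _).
  apply: ler_sum => s _; have sT := ltn_ord s.
  rewrite /sleeping_pred /awake history_energy_hist; case: ifP => _.
    by rewrite addr0 clipped_expertE //; exact: validX.
  by rewrite sqloss0; exact: sqnorm_le_sqloss_expert (validY sT).
rewrite big_split /= lerD2l.
exact: (@sum_below_threshold_le2 R (fun r => energy n (ys r)) T energy01).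
Qed.

Lemma hedge_loss_le n : 0 < eta ->
  hedge_loss T <= class_loss (expert n) T xs ys + 2 + ln K.+1%:R / eta + 16 * eta * T%:R.
Proof.
move=> eta_gt0; have := le_trans (potential_ge n) (potential_le (leqnn T)).
rewrite -[X in X * expR _](@lnK _ K.+1%:R) ?posrE ?ltr0Sn // -expRD ler_expR => Phi_bound.
have sleeping_le := ler_wpM2l eta_ge0 (sleeping_loss_le n).
have ln_eta : eta * (ln K.+1%:R / eta) = ln K.+1%:R by rewrite mulrC mulfVK ?gt_eqF.
rewrite -(ler_pM2l eta_gt0); nra.
Qed.

End HedgeAnalysis.

Section DeterministicLearners.
Variable R : realType.
Variables (A : seq (vec R * vec R) -> vec R -> vec R) (A_inY : forall h x, inY (A h x)).

Definition deterministic_learner : learner R :=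
  @Learner R _ unit (\d_ tt) (fun _ => A) (fun _ => A_inY) (fun _ _ _ => measurable_cst _).

Lemma regret_deterministic_le T (F : set (vec R -> vec R)) (B : R) :
  (forall xs ys, valid_seq T (xs, ys) -> forall f, F f ->
     \sum_(t < T) sqloss (A (hist xs ys t) (xs t)) (ys t) <= class_loss f T xs ys + B) ->
  (regret deterministic_learner T F <= B%:E)%E.
Proof.
move=> loss_le; apply: ge_ereal_sup => _ [[xs ys] valid <-].
set L := \sum_(t < T) sqloss (A (hist xs ys t) (xs t)) (ys t).
have -> : (fun w => (@learner_loss _ deterministic_learner T xs ys w)%:E) = cst L%:E by [].
rewrite integral_cst //= diracT mule1 lee_subel_addr //.
have inf_ge : ((L - B)%:E <= ereal_inf [set (class_loss f T xs ys)%:E | f in F])%E.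
  by apply: le_ereal_inf_tmp => _ [f Ff <-]; rewrite lee_fin lerBlDr loss_le.
by apply: le_trans (leeD2l _ inf_ge); rewrite -EFinD addrC subrK.
Qed.

End DeterministicLearners.

Definition hedge_learner (R : realType) (K : nat) (eta : R) : learner R :=
  deterministic_learner (@inY_hedge_pred R K eta).

Lemma hedge_tuning (R : realType) (T : nat) : (0 < T)%N ->
  exists2 eta : R, 0 < eta &
    ln T.+1%:R / eta + 16 * eta * T%:R <= 8 * Num.sqrt (T%:R * ln (2 * T%:R)).
Proof.
move=> T_gt0; set c := Num.sqrt _.
have T1 : 1 <= T%:R :> R by rewrite ler1n.
have ln_gt0 : 0 < ln (2 * T%:R : R) by apply: ln_gt0; lra.
have c_gt0 : 0 < c by rewrite sqrtr_gt0 mulr_gt0 //; lra.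
have c2 : c ^+ 2 = T%:R * ln (2 * T%:R) by rewrite sqr_sqrtr // mulr_ge0 //; lra.
have lnT : ln T.+1%:R <= ln (2 * T%:R : R).
  by rewrite ler_ln ?posrE ?ltr0Sn -?natr1; lra.
exists (c / (4 * T%:R)); first by rewrite divr_gt0 //; lra.
have -> : 16 * (c / (4 * T%:R)) * T%:R = 4 * c by field; lra.
suff : ln T.+1%:R / (c / (4 * T%:R)) <= 4 * c by lra.
rewrite ler_pdivrMr ?divr_gt0 //; last lra.
have -> : 4 * c * (c / (4 * T%:R)) = c ^+ 2 / T%:R by field; lra.
by rewrite c2 mulrAC divff ?mul1r // pnatr_eq0 -lt0n.
Qed.

Unset Implicit Arguments.

Theorem theorem6 (R : realType) :
  exists F : set (vec R -> vec R),
    (forall f, F f -> trace_class f) /\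
    forall T : nat, (0 < T)%N ->
      ((T%:R / 2 : R)%:E <= Rad F T)%E /\
      (forall eps : R, 0 < eps ->
         exists L : learner R,
           (regret L T F <=
              (2 + 8 * Num.sqrt (T%:R * ln (2 * T%:R)) + eps)%:E)%E).
Proof.
exists (@expert_class R); split; first exact: trace_class_expert_class.
move=> T T_gt0; split; first exact: Rad_expert_class_ge.
move=> eps eps_gt0; have [eta eta_gt0 tuned] := hedge_tuning R T_gt0.
exists (hedge_learner T eta); apply: regret_deterministic_le => xs ys valid _ [n _ <-].
have := hedge_loss_le valid (leqnn T) (ltW eta_gt0) n eta_gt0; lra.
Qed.
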